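(* Let $(M,d)$ be a complete pointed metric space and let $\nu$ be a positive Radon measure on $\beta\widetilde{M}$. Then there exists a $\preccurlyeq$-minimal positive Radon measure $\mu$ on $\beta\widetilde{M}$ with $\mu\preccurlyeq\nu$.
   Context: $\widetilde{M}=\{(x,y)\in M\times M:x\ne y\}$, $\beta\widetilde{M}$ its Stone–Čech compactification; Radon measures identified with $C(\beta\widetilde{M})^*$. $G$ is the set of $g\in C(\beta\widetilde{M})$ with $d(x,y)g(x,y)\le d(x,u)g(x,u)+d(u,y)g(u,y)$ for all distinct $x,u,y\in M$. For positive Radon measures, $\mu\preccurlyeq\nu$ iff $\int g\,d\mu\le\int g\,d\nu$ for all $g\in G$; $\mu$ is $\preccurlyeq$-minimal if every positive $\lambda$ with $\lambda\preccurlyeq\mu$ satisfies $\mu\preccurlyeq\lambda$. Throughout, $M$ has at least three distinct points. *)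

From Stdlib Require Import Reals.
Open Scope R_scope.

Definition is_metric {T : Type} (d : T -> T -> R) : Prop :=
  (forall x y, 0 <= d x y) /\
  (forall x y, d x y = 0 <-> x = y) /\
  (forall x y, d x y = d y x) /\
  (forall x y z, d x z <= d x y + d y z).

Definition complete_metric {T : Type} (d : T -> T -> R) : Prop :=
  forall u : nat -> T,
    (forall eps, 0 < eps -> exists N, forall m n, (N <= m)%nat -> (N <= n)%nat ->
        d (u m) (u n) < eps) ->
    exists l, forall eps, 0 < eps -> exists N, forall n, (N <= n)%nat -> d (u n) l < eps.

Definition Mt (T : Type) := {p : T * T | fst p <> snd p}.

Definition mt_x {T} (p : Mt T) : T := fst (proj1_sig p).
Definition mt_y {T} (p : Mt T) : T := snd (proj1_sig p).

(** A metric on Mtilde inducing the (subspace of the) product topology. *)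
Definition dt {T} (d : T -> T -> R) (p q : Mt T) : R :=
  d (mt_x p) (mt_x q) + d (mt_y p) (mt_y q).

(** C(beta Mtilde) identified (by restriction) with the bounded continuous
    real functions on Mtilde. *)
Definition Cb {T} (d : T -> T -> R) (g : Mt T -> R) : Prop :=
  (exists C, forall p, Rabs (g p) <= C) /\
  (forall p eps, 0 < eps -> exists delta, 0 < delta /\
      forall q, dt d p q < delta -> Rabs (g q - g p) < eps).

(** Positive Radon measures on beta Mtilde = positive linear functionals on
    C(beta Mtilde) = C_b(Mtilde) (Riesz); only their values on C_b matter. *)
Definition positive_radon {T} (d : T -> T -> R) (mu : (Mt T -> R) -> R) : Prop :=
  (forall f g a b, Cb d f -> Cb d g ->
     mu (fun p => a * f p + b * g p) = a * mu f + b * mu g) /\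
  (forall f, Cb d f -> (forall p, 0 <= f p) -> 0 <= mu f).

Definition in_G {T} (d : T -> T -> R) (g : Mt T -> R) : Prop :=
  Cb d g /\
  forall (x u y : T) (hxu : x <> u) (huy : u <> y) (hxy : x <> y),
    d x y * g (exist _ (x, y) hxy) <=
      d x u * g (exist _ (x, u) hxu) + d u y * g (exist _ (u, y) huy).

Definition preceq {T} (d : T -> T -> R) (mu nu : (Mt T -> R) -> R) : Prop :=
  forall g, in_G d g -> mu g <= nu g.

Definition preceq_minimal {T} (d : T -> T -> R) (mu : (Mt T -> R) -> R) : Prop :=
  forall lam, positive_radon d lam -> preceq d lam mu -> preceq d mu lam.

(* Zorn's lemma for the measures [mu ≼ nu], preordered by ≽.  A chain has a lower
   bound: the weak-* limit along an ultrafilter refining the tail filter of the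
   chain.  Since [1] lies in [G] (triangle inequality), the masses [mu 1] are
   bounded along the tail, hence so is each [mu f], and the limit exists; it is
   linear and positive, and since [mu g] decreases along the chain for [g] in [G],
   it lies below every member.  A Zorn-maximal element is ≼-minimal. *)

From mathcomp Require Import ssreflect ssrbool boolp classical_sets filter.
From Stdlib Require Import Reals Lra Psatz.
Local Open Scope classical_set_scope.
Open Scope R_scope.

Definition is_lim_along {I : Type} (U : set_system I) (x : I -> R) (l : R) : Prop :=
  forall eps, 0 < eps -> U (fun i => Rabs (x i - l) < eps).

Lemma Rabs_lin_comb_lt a b x y l m eps :
  0 < eps ->
  Rabs (x - l) < eps / (Rabs a + Rabs b + 1) ->
  Rabs (y - m) < eps / (Rabs a + Rabs b + 1) ->
  Rabs (a * x + b * y - (a * l + b * m)) < eps.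
Proof.
move=> eps_pos xl ym.
have ab_pos := Rplus_le_le_0_compat _ _ (Rabs_pos a) (Rabs_pos b).
have eps_k : eps = (Rabs a + Rabs b + 1) * (eps / (Rabs a + Rabs b + 1)) by field; lra.
have : Rabs a * Rabs (x - l) + Rabs b * Rabs (y - m) < eps.
  have := Rmult_le_compat_l _ _ _ (Rabs_pos a) (Rlt_le _ _ xl).
  have := Rmult_le_compat_l _ _ _ (Rabs_pos b) (Rlt_le _ _ ym).
  nra.
apply: Rle_lt_trans; rewrite -!Rabs_mult.
replace (a * x + b * y - (a * l + b * m)) with (a * (x - l) + b * (y - m)) by ring.
exact: Rabs_triang.
Qed.

Section LimitsAlongFilters.
Context {I : Type} {U : set_system I}.

Lemma is_lim_along_eq {FU : Filter U} {x y l} :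
  is_lim_along U x l -> U (fun i => x i = y i) -> is_lim_along U y l.
Proof.
move=> xl xy eps eps_pos; apply: filterS (filterI xy (xl _ eps_pos)).
by move=> i [<-].
Qed.

Lemma is_lim_along_lin {FU : Filter U} (a b : R) {x y l m} :
  is_lim_along U x l -> is_lim_along U y m ->
  is_lim_along U (fun i => a * x i + b * y i) (a * l + b * m).
Proof.
move=> xl ym eps eps_pos.
have k_pos : 0 < eps / (Rabs a + Rabs b + 1).
  by apply: Rdiv_lt_0_compat => //; have := Rabs_pos a; have := Rabs_pos b; lra.
apply: filterS (filterI (xl _ k_pos) (ym _ k_pos)) => i [xil yim].
exact: Rabs_lin_comb_lt.
Qed.

Lemma is_lim_along_ub {PU : ProperFilter U} {x l c} :
  is_lim_along U x l -> U (fun i => x i <= c) -> l <= c.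
Proof.
move=> xl xc; apply: Rnot_lt_le => cl.
have eps_pos : 0 < l - c by lra.
have [i [/Rabs_def2 xil xic]] := filter_ex (filterI (xl _ eps_pos) xc).
lra.
Qed.

Lemma is_lim_along_lb {PU : ProperFilter U} {x l c} :
  is_lim_along U x l -> U (fun i => c <= x i) -> c <= l.
Proof.
move=> xl xc; apply: Rnot_lt_le => lc.
have eps_pos : 0 < c - l by lra.
have [i [/Rabs_def2 xil xic]] := filter_ex (filterI (xl _ eps_pos) xc).
lra.
Qed.

Lemma is_lim_along_unique {PU : ProperFilter U} {x l1 l2} :
  is_lim_along U x l1 -> is_lim_along U x l2 -> l1 = l2.
Proof.
have lim_le l l' : is_lim_along U x l -> is_lim_along U x l' -> l <= l'.
  move=> xl xl'; apply: Rnot_lt_le => l'l.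
  suff : l <= (l + l') / 2 by lra.
  have half_pos : 0 < (l - l') / 2 by lra.
  apply: is_lim_along_ub xl _; apply: filterS (xl' _ half_pos).
  by move=> i /Rabs_def2; lra.
by move=> xl1 xl2; apply: Rle_antisym; apply: lim_le.
Qed.

(* The limit is the supremum of the levels [a] that [x] eventually exceeds. *)
Lemma is_lim_along_ex {UU : UltraFilter U} {x B} :
  U (fun i => Rabs (x i) <= B) -> exists l, is_lim_along U x l.
Proof.
move=> xB; pose S a := U (fun i => a <= x i).
have S_ub a : S a -> a <= B.
  move=> Sa; have [i [axi xiB]] := filter_ex (filterI Sa xB).
  by have := Rle_abs (x i); lra.
have S_lb : S (- B) by apply: filterS xB => i; split_Rabs; lra.
have [l [l_ub l_lub]] := completeness S (ex_intro _ B S_ub) (ex_intro _ _ S_lb).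
exists l => eps eps_pos.
have [a [Sa la]] : exists a, S a /\ l - eps < a.
  apply: contrapT => noa; suff : l <= l - eps by lra.
  apply: l_lub => a Sa; apply: Rnot_lt_le => ?; apply: noa; by exists a.
have [|] := in_ultra_setVsetC (fun i => l + eps / 2 <= x i) UU.
  by move=> /l_ub; lra.
move=> Uabove; apply: filterS (filterI Sa Uabove) => i [/= axi /Rnot_le_lt xil].
apply: Rabs_def1; lra.
Qed.

End LimitsAlongFilters.

Section RadonFunctionals.
Context {T : Type} {d : T -> T -> R}.

Lemma Cb_const c : Cb d (fun _ => c).
Proof.
split; first by exists (Rabs c) => _; apply: Rle_refl.
move=> p eps eps_pos; exists 1; split=> [|q _]; first lra.
by rewrite Rminus_diag Rabs_R0.
Qed.

Lemma Cb_lin f g a b : Cb d f -> Cb d g -> Cb d (fun p => a * f p + b * g p).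
Proof.
move=> [[Cf fCf] f_cont] [[Cg gCg] g_cont]; split.
  exists (Rabs a * Cf + Rabs b * Cg) => p.
  apply: Rle_trans (Rabs_triang _ _) _; rewrite !Rabs_mult.
  apply: Rplus_le_compat; apply: Rmult_le_compat_l; by [apply: Rabs_pos|].
move=> p eps eps_pos.
have k_pos : 0 < eps / (Rabs a + Rabs b + 1).
  by apply: Rdiv_lt_0_compat => //; have := Rabs_pos a; have := Rabs_pos b; lra.
have [df [df_pos df_cont]] := f_cont p _ k_pos.
have [dg [dg_pos dg_cont]] := g_cont p _ k_pos.
exists (Rmin df dg); split=> [|q pq]; first exact: Rmin_pos.
apply: Rabs_lin_comb_lt => //.
  by apply: df_cont; apply: Rlt_le_trans pq (Rmin_l _ _).
by apply: dg_cont; apply: Rlt_le_trans pq (Rmin_r _ _).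
Qed.

Lemma positive_radon_abs_le lam f C :
  positive_radon d lam -> Cb d f -> (forall p, Rabs (f p) <= C) ->
  Rabs (lam f) <= Rabs C * lam (fun _ => 1).
Proof.
move=> [lam_lin lam_pos] Cb_f fC; have Cb_1 := Cb_const 1.
have shifted_pos s : Rabs s <= 1 -> 0 <= Rabs C * lam (fun _ => 1) + s * lam f.
  move=> s1; rewrite -lam_lin //.
  apply: lam_pos => [|p]; first exact: Cb_lin.
  have := Rle_abs (- (s * f p)); rewrite Rabs_Ropp Rabs_mult.
  have := Rmult_le_compat _ _ _ _ (Rabs_pos s) (Rabs_pos (f p)) s1 (fC p).
  have := Rle_abs C; lra.
have := shifted_pos 1; have := shifted_pos (-1).
rewrite Rabs_Ropp Rabs_R1 => /(_ (Rle_refl _)) ? /(_ (Rle_refl _)) ?.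
apply: Rabs_le; lra.
Qed.

Lemma one_in_G : is_metric d -> in_G d (fun _ => 1).
Proof.
move=> [_ [_ [_ d_triangle]]]; split; first exact: Cb_const.
by move=> x u y *; rewrite !Rmult_1_r; apply: d_triangle.
Qed.

Lemma preceq_refl mu : preceq d mu mu.
Proof. by move=> g _; apply: Rle_refl. Qed.

Lemma preceq_trans {lam mu nu} : preceq d lam mu -> preceq d mu nu -> preceq d lam nu.
Proof. by move=> lam_mu mu_nu g Gg; apply: Rle_trans (lam_mu g Gg) (mu_nu g Gg). Qed.

End RadonFunctionals.

Section WeakStarUltralimit.
Variables (T : Type) (d : T -> T -> R) (U : set_system ((Mt T -> R) -> R)) (m : R).
Context {U_ultra : UltraFilter U}.
Hypothesis U_radon_bounded : U (fun lam => positive_radon d lam /\ lam (fun _ => 1) <= m).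

Lemma ultralimit_radon : exists mu, positive_radon d mu /\
  forall f, Cb d f -> is_lim_along U (fun lam => lam f) (mu f).
Proof.
have lim_ex f : exists l, Cb d f -> is_lim_along U (fun lam => lam f) l.
  have [Cb_f|] := pselect (Cb d f); last by exists 0.
  have [C fC] := proj1 Cb_f.
  suff [l fl] : exists l, is_lim_along U (fun lam => lam f) l by exists l.
  apply: (is_lim_along_ex (B := Rabs C * m)).
  apply: filterS U_radon_bounded => lam [lam_radon lam_mass].
  apply: Rle_trans (positive_radon_abs_le _ _ _ lam_radon Cb_f fC) _.
  exact: Rmult_le_compat_l (Rabs_pos C) lam_mass.
have [mu mu_lim] := choice lim_ex.
exists mu; split=> //; split=> [f g a b Cb_f Cb_g|f Cb_f f_pos].
  apply: is_lim_along_unique (mu_lim _ (Cb_lin f g a b Cb_f Cb_g)) _.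
  apply: (is_lim_along_eq (is_lim_along_lin a b (mu_lim f Cb_f) (mu_lim g Cb_g))).
  by apply: filterS U_radon_bounded => lam [[lam_lin _] _]; rewrite lam_lin.
apply: is_lim_along_lb (mu_lim f Cb_f) _.
by apply: filterS U_radon_bounded => lam [[_ lam_pos] _]; apply: lam_pos.
Qed.

End WeakStarUltralimit.

Lemma chain_lower_bound {T : Type} {d : T -> T -> R} (A : set ((Mt T -> R) -> R)) :
  is_metric d -> A `<=` positive_radon d -> A !=set0 -> total_on A (preceq d) ->
  exists2 mu, positive_radon d mu & forall c, A c -> preceq d mu c.
Proof.
move=> d_metric A_radon [c0 Ac0] A_total.
pose tail c := [set lam | A lam /\ preceq d lam c].
have tail_proper : ProperFilter (filter_from A tail).
  apply: filter_from_proper => [|c Ac]; last by exists c; split=> //; apply: preceq_refl.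
  apply: filter_from_filter; first by exists c0.
  move=> c1 c2 Ac1 Ac2; have [c12|c21] := A_total c1 c2 Ac1 Ac2.
    by exists c1 => // lam [Alam lam_c1]; do !split=> //; apply: preceq_trans c12.
  by exists c2 => // lam [Alam lam_c2]; do !split=> //; apply: preceq_trans c21.
have [U [U_ultra tail_U]] := ultraFilterLemma tail_proper.
have [|mu [mu_radon mu_lim]] := @ultralimit_radon T d U (c0 (fun _ => 1)) U_ultra.
  apply: tail_U; exists c0 => // lam [Alam lam_c0]; split; first exact: A_radon.
  exact: lam_c0 _ (one_in_G d_metric).
exists mu => // c Ac g Gg; apply: is_lim_along_ub (mu_lim g (proj1 Gg)) _.
by apply: tail_U; exists c => // lam [_ lam_c]; apply: lam_c.
Qed.

Definition radon_below {T : Type} (d : T -> T -> R) (nu : (Mt T -> R) -> R) :=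
  {mu | positive_radon d mu /\ preceq d mu nu}.

Definition succeq_below {T : Type} (d : T -> T -> R) nu : rel (radon_below d nu) :=
  fun a b => `[< preceq d (proj1_sig b) (proj1_sig a) >].

Lemma radon_below_chain_bounded {T : Type} (d : T -> T -> R) nu (A : set (radon_below d nu)) :
  is_metric d -> positive_radon d nu -> total_on A (succeq_below d nu) ->
  exists t, forall s, A s -> succeq_below d nu s t.
Proof.
move=> d_metric nu_radon A_total.
have [[c0 Ac0]|A0] := pselect (A !=set0); last first.
  exists (exist _ nu (conj nu_radon (preceq_refl nu))) => s As.
  by case: A0; exists s.
have [| | |mu mu_radon mu_low] := chain_lower_bound (@proj1_sig _ _ @` A) d_metric.
- by move=> _ [c _ <-]; case: (proj2_sig c).
- by exists (proj1_sig c0), c0.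
- move=> _ _ [a Aa <-] [b Ab <-].
  by have [/asboolP|/asboolP] := A_total a b Aa Ab; [right|left].
have mu_nu := preceq_trans (mu_low _ (imageP _ Ac0)) (proj2 (proj2_sig c0)).
exists (exist _ mu (conj mu_radon mu_nu)) => s As.
exact/asboolP/mu_low/imageP.
Qed.

Theorem proposition3p10 (T : Type) (d : T -> T -> R) (base : T)
  (Hmet : is_metric d) (Hcomplete : complete_metric d)
  (H3 : exists x y z : T, x <> y /\ y <> z /\ x <> z)
  (nu : (Mt T -> R) -> R) (Hnu : positive_radon d nu) :
  exists mu : (Mt T -> R) -> R,
    positive_radon d mu /\ preceq_minimal d mu /\ preceq d mu nu.
Proof.
pose nu_below : radon_below d nu := exist _ nu (conj Hnu (preceq_refl nu)).
have [t t_max] : exists t, premaximal (succeq_below d nu) t.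
  apply: (ZL_preorder nu_below).
  - by move=> a; apply/asboolP/preceq_refl.
  - by move=> a b c /asboolP ab /asboolP bc; apply/asboolP; apply: preceq_trans bc ab.
  - move=> A; exact: (radon_below_chain_bounded d nu A Hmet Hnu).
have [t_radon t_nu] := proj2_sig t.
exists (proj1_sig t); split=> //; split=> // lam lam_radon lam_t.
pose s : radon_below d nu := exist _ lam (conj lam_radon (preceq_trans lam_t t_nu)).
by move/asboolP: (t_max s (asboolT lam_t)).
Qed.
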